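(* Let $n\ge 1$, $v>0$, $p\in(0,1)$, $z>0$, and let $R_1,\dots,R_n>0$. Consider the system of equations in unknowns $a_0,b_0$: $$\frac{1-p}{p}b_0=\sum_{i=1}^n\frac{1+\frac{b_0}{a_0R_i}}{v-\frac{1}{a_0}-\frac{1}{b_0}},\qquad \frac{1}{zp}b_0-a_0=\sum_{i=1}^n\frac{1+\frac{a_0R_i}{b_0}}{v-\frac{1}{a_0}-\frac{1}{b_0}}.$$ Then this system has a unique positive solution ($a_0>0$, $b_0>0$). Moreover, with $r_1=\sum_{i=1}^n 1/R_i$, $r_2=\sum_{i=1}^n R_i$, $$D=n^2p^2z^2-2n^2pz^2+2n^2pz+n^2z^2-2n^2z+n^2-2np^2r_1z^2+2npr_1z^2+2npr_1z+p^2r_1^2z^2-4pr_1r_2z+4r_1r_2z,$$ and $$c=\frac{npz-nz+n-pr_1z+\sqrt{D}}{2z\,(np+(1-p)r_2)},$$ the positive solution is given by $c=a_0/b_0$, $$b_0=\frac{1}{v}\left(\frac{p}{1-p}\left(n+\frac{r_1}{c}\right)+1+\frac{1}{c}\right),\qquad a_0=c\,b_0.$$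
   Context: These are the Hamling equations for log odds ratios in the case where all reported variances $V_i$ equal $v$: $R_i$ are reported odds ratios, $p$ is the ratio of unexposed controls to total controls, $z$ is the ratio of total controls to total cases, and $a_0,b_0$ are the reference-group pseudo-cases and pseudo-non-cases. (Pseudo-counts at the other exposures are then $A_i=(1+a_0R_i/b_0)/(V_i-1/a_0-1/b_0)$ and $B_i=(1+b_0/(a_0R_i))/(V_i-1/a_0-1/b_0)$.) *)

(* the statement is algebraic, stated over any real closed field R
   (which includes the real numbers). *)
From mathcomp Require Import all_boot all_order all_algebra.
Set Implicit Arguments. Unset Strict Implicit. Unset Printing Implicit Defensive.
Import Order.TTheory GRing.Theory Num.Theory.
Local Open Scope ring_scope.

Definition hden (R : rcfType) (v a0 b0 : R) : R := v - 1 / a0 - 1 / b0.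

Definition hamling_eq1 (R : rcfType) (n : nat) (Rs : 'I_n -> R) (v p a0 b0 : R) : Prop :=
  (1 - p) / p * b0 = \sum_(i < n) (1 + b0 / (a0 * Rs i)) / hden v a0 b0.

Definition hamling_eq2 (R : rcfType) (n : nat) (Rs : 'I_n -> R) (v p z a0 b0 : R) : Prop :=
  1 / (z * p) * b0 - a0 = \sum_(i < n) (1 + a0 * Rs i / b0) / hden v a0 b0.

(* a positive solution; the denominator is required to be nonzero so that the
   equations make sense. *)
Definition hamling_pos_sol (R : rcfType) (n : nat) (Rs : 'I_n -> R) (v p z a0 b0 : R) : Prop :=
  [/\ 0 < a0, 0 < b0, hden v a0 b0 != 0,
      hamling_eq1 Rs v p a0 b0 & hamling_eq2 Rs v p z a0 b0].

Definition hr1 (R : rcfType) (n : nat) (Rs : 'I_n -> R) : R := \sum_(i < n) 1 / Rs i.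
Definition hr2 (R : rcfType) (n : nat) (Rs : 'I_n -> R) : R := \sum_(i < n) Rs i.

Definition hD (R : rcfType) (n : nat) (Rs : 'I_n -> R) (p z : R) : R :=
  let N := n%:R in let r1 := hr1 Rs in let r2 := hr2 Rs in
  N^+2 * p^+2 * z^+2 - 2 * N^+2 * p * z^+2 + 2 * N^+2 * p * z + N^+2 * z^+2
  - 2 * N^+2 * z + N^+2 - 2 * N * p^+2 * r1 * z^+2 + 2 * N * p * r1 * z^+2
  + 2 * N * p * r1 * z + p^+2 * r1^+2 * z^+2 - 4 * p * r1 * r2 * z + 4 * r1 * r2 * z.

Definition hc (R : rcfType) (n : nat) (Rs : 'I_n -> R) (p z : R) : R :=
  let N := n%:R in let r1 := hr1 Rs in let r2 := hr2 Rs in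
  (N * p * z - N * z + N - p * r1 * z + Num.sqrt (hD Rs p z))
    / (2 * z * (N * p + (1 - p) * r2)).

Definition hb0 (R : rcfType) (n : nat) (Rs : 'I_n -> R) (v p z : R) : R :=
  let c := hc Rs p z in
  1 / v * (p / (1 - p) * (n%:R + hr1 Rs / c) + 1 + 1 / c).

Definition ha0 (R : rcfType) (n : nat) (Rs : 'I_n -> R) (v p z : R) : R :=
  hc Rs p z * hb0 Rs v p z.

From mathcomp Require Import all_boot all_order all_algebra.
From mathcomp Require Import ring.
Set Implicit Arguments. Unset Strict Implicit. Unset Printing Implicit Defensive.
Import Order.TTheory GRing.Theory Num.Theory.
Local Open Scope ring_scope.

(* With c = a0 / b0, both equations share the factor 1 / (v - 1/a0 - 1/b0); eliminating it
   leaves a quadratic qa c^2 + qb c - r1 = 0 with qa > 0 and r1 > 0, whose roots have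
   product -r1/qa < 0, so exactly one of them is positive: it is hc.  Once c is known the
   first equation is linear in b0, which gives hb0.  Conversely, for these values the
   denominator equals p (n c + r1) / ((1 - p) b0 c) > 0, and both equations reduce to
   the quadratic. *)

Lemma sumr_ord_gt0 (R : numDomainType) (n : nat) (F : 'I_n -> R) :
  (0 < n)%N -> (forall i, 0 < F i) -> 0 < \sum_(i < n) F i.
Proof.
case: n F => [//|n] F _ F_gt0.
by rewrite big_ord_recl ltr_wpDr ?sumr_ge0 // => i _; apply: ltW.
Qed.

Section PositiveRoot.
Variables (R : rcfType) (A B C : R).
Hypotheses (A_gt0 : 0 < A) (C_gt0 : 0 < C).

Definition quad_pos_root : R := (Num.sqrt (B ^+ 2 + 4 * A * C) - B) / (2 * A).

Let s := Num.sqrt (B ^+ 2 + 4 * A * C).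

Let AC4_gt0 : 0 < 4 * A * C. Proof. by rewrite !mulr_gt0. Qed.

Let sqr_s : s ^+ 2 = B ^+ 2 + 4 * A * C.
Proof. by rewrite sqr_sqrtr // addr_ge0 ?sqr_ge0 ?ltW. Qed.

Let B_between : - s < B < s.
Proof. by rewrite -ltr_norml -sqrtr_sqr ltr_sqrt ?ltrDl // ltr_wpDl ?sqr_ge0. Qed.

Lemma quad_pos_root_gt0 : 0 < quad_pos_root.
Proof. by case/andP: B_between => _ ?; rewrite divr_gt0 ?mulr_gt0 // subr_gt0. Qed.

Lemma quad_pos_rootP (x : R) : 0 < x ->
  A * x ^+ 2 + B * x - C = 0 <-> x = quad_pos_root.
Proof.
move=> x_gt0; have A_neq0 : A != 0 by rewrite gt_eqF.
rewrite /quad_pos_root -/s; split=> [root_x|->]; last first.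
  have -> : A * ((s - B) / (2 * A)) ^+ 2 + B * ((s - B) / (2 * A)) - C
            = (s ^+ 2 - (B ^+ 2 + 4 * A * C)) / (4 * A) by field.
  by rewrite sqr_s subrr mul0r.
have factor : (2 * A * x + B - s) * (2 * A * x + B + s) = 0.
  have -> : (2 * A * x + B - s) * (2 * A * x + B + s)
            = 4 * A * (A * x ^+ 2 + B * x - C) + (B ^+ 2 + 4 * A * C - s ^+ 2) by ring.
  by rewrite root_x sqr_s mulr0 subrr addr0.
have other_factor_neq0 : 2 * A * x + B + s != 0.
  case/andP: B_between => /ltW Ns_le_B _.
  by rewrite gt_eqF // -addrA ltr_pwDl ?mulr_gt0 // -[s]opprK subr_ge0.
move/eqP: factor; rewrite mulf_eq0 (negPf other_factor_neq0) orbF => /eqP root.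
have -> : (s - B) / (2 * A) = x - (2 * A * x + B - s) / (2 * A) by field.
by rewrite root mul0r subr0.
Qed.

End PositiveRoot.

(* [field] leaves the nonvanishing of the denominators as one boolean conjunction. *)
Ltac field_nz := field; by repeat (apply/andP; split).

Section ReducedSystem.
Variables (R : rcfType) (N r1 r2 v p z : R).
Hypotheses (N_ge0 : 0 <= N) (r1_gt0 : 0 < r1) (r2_gt0 : 0 < r2) (v_gt0 : 0 < v)
  (p_gt0 : 0 < p) (p_lt1 : p < 1) (z_gt0 : 0 < z).

Definition hamling_red_eq1 (a b : R) : Prop :=
  (1 - p) / p * b = (N + b / a * r1) / hden v a b.
Definition hamling_red_eq2 (a b : R) : Prop :=
  1 / (z * p) * b - a = (N + a / b * r2) / hden v a b.

Definition hamling_qa : R := z * (p * N + (1 - p) * r2).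
Definition hamling_qb : R := (1 - p) * N * z + p * r1 * z - N.
Definition hamling_quad (c : R) : R := hamling_qa * c ^+ 2 + hamling_qb * c - r1.
Definition hamling_b (c : R) : R := 1 / v * (p / (1 - p) * (N + r1 / c) + 1 + 1 / c).

Let p_neq0 : p != 0. Proof. by rewrite gt_eqF. Qed.
Let q_gt0 : 0 < 1 - p. Proof. by rewrite subr_gt0. Qed.
Let q_neq0 : 1 - p != 0. Proof. by rewrite gt_eqF. Qed.
Let v_neq0 : v != 0. Proof. by rewrite gt_eqF. Qed.
Let z_neq0 : z != 0. Proof. by rewrite gt_eqF. Qed.

Lemma hamling_qa_gt0 : 0 < hamling_qa.
Proof. by rewrite mulr_gt0 // (ltr_wpDl (mulr_ge0 (ltW p_gt0) N_ge0)) ?mulr_gt0. Qed.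

Lemma hamling_quad_ratio (a b : R) : 0 < a -> 0 < b ->
  hamling_red_eq1 a b -> hamling_red_eq2 a b -> hamling_quad (a / b) = 0.
Proof.
move=> a_gt0 b_gt0 eq1 eq2.
have a_neq0 : a != 0 by rewrite gt_eqF.
have b_neq0 : b != 0 by rewrite gt_eqF.
have cross : (N + a / b * r2) * ((1 - p) / p * b)
             = (1 / (z * p) * b - a) * (N + b / a * r1).
  by rewrite eq1 eq2 mulrA mulrAC.
have -> : hamling_quad (a / b) = z * p * a / b ^+ 2 *
    ((N + a / b * r2) * ((1 - p) / p * b) - (1 / (z * p) * b - a) * (N + b / a * r1)).
  by rewrite /hamling_quad /hamling_qa /hamling_qb; field_nz.
by rewrite cross subrr mulr0.
Qed.

Lemma hamling_bE (a b : R) : 0 < a -> 0 < b -> hden v a b != 0 ->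
  hamling_red_eq1 a b -> b = hamling_b (a / b).
Proof.
move=> a_gt0 b_gt0 d_neq0 eq1.
have a_neq0 : a != 0 by rewrite gt_eqF.
have b_neq0 : b != 0 by rewrite gt_eqF.
have -> : hamling_b (a / b)
          = b - p / ((1 - p) * v) * ((1 - p) / p * b * hden v a b - (N + b / a * r1)).
  by rewrite /hamling_b /hden; field_nz.
by rewrite eq1 divfK // subrr mulr0 subr0.
Qed.

Lemma hamling_red_sol (c : R) : 0 < c -> hamling_quad c = 0 ->
  let b := hamling_b c in
  [/\ 0 < b, hden v (c * b) b != 0, hamling_red_eq1 (c * b) b & hamling_red_eq2 (c * b) b].
Proof.
move=> c_gt0 quad_c b.
have c_neq0 : c != 0 by rewrite gt_eqF.
have b_gt0 : 0 < b.
  have Nr_ge0 : 0 <= N + r1 / c by rewrite addr_ge0 // divr_ge0 // ltW.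
  rewrite /b /hamling_b mulr_gt0 ?divr_gt0 // ltr_wpDr ?divr_ge0 ?ltW //.
  by rewrite ltr_wpDl ?ltr01 // mulr_ge0 // divr_ge0 // ltW.
have b_neq0 : b != 0 by rewrite gt_eqF.
have Ncr_gt0 : 0 < N * c + r1 by rewrite ltr_wpDl // mulr_ge0 // ltW.
have Ncr_neq0 : N * c + r1 != 0 by rewrite gt_eqF.
have vb : v * b = p / (1 - p) * (N + r1 / c) + 1 + 1 / c.
  by rewrite /b /hamling_b; field_nz.
have dE : hden v (c * b) b = p * (N * c + r1) / ((1 - p) * b * c).
  have -> : hden v (c * b) b = (v * b - 1 / c - 1) / b by rewrite /hden; field_nz.
  by rewrite vb; field_nz.
clearbody b; split=> //; rewrite /hamling_red_eq1 /hamling_red_eq2 dE.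
- by rewrite gt_eqF // divr_gt0 ?mulr_gt0.
- field_nz.
apply/eqP; rewrite -subr_eq0; apply/eqP.
have -> : 1 / (z * p) * b - c * b
            - (N + c * b / b * r2) / (p * (N * c + r1) / ((1 - p) * b * c))
          = - b / (z * p * (N * c + r1)) * hamling_quad c.
  by rewrite /hamling_quad /hamling_qa /hamling_qb; field_nz.
by rewrite quad_c mulr0.
Qed.

End ReducedSystem.

Section HamlingSystem.
Variables (R : rcfType) (n : nat) (Rs : 'I_n -> R) (v p z : R).
Hypotheses (n_gt0 : (0 < n)%N) (v_gt0 : 0 < v) (p_gt0 : 0 < p) (p_lt1 : p < 1)
  (z_gt0 : 0 < z) (Rs_gt0 : forall i, 0 < Rs i).

Local Notation N := (n%:R : R).
Local Notation r1 := (hr1 Rs).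
Local Notation r2 := (hr2 Rs).
Local Notation qa := (hamling_qa N r2 p z).
Local Notation qb := (hamling_qb N r1 p z).

Let N_ge0 : 0 <= N. Proof. exact: ler0n. Qed.
Let r1_gt0 : 0 < r1. Proof. by apply: sumr_ord_gt0 => // i; rewrite divr_gt0. Qed.
Let r2_gt0 : 0 < r2. Proof. exact: sumr_ord_gt0. Qed.
Let qa_gt0 : 0 < qa. Proof. exact: hamling_qa_gt0. Qed.

Lemma hamling_eq1E (a b : R) : hamling_eq1 Rs v p a b = hamling_red_eq1 N r1 v p a b.
Proof.
rewrite /hamling_eq1 /hamling_red_eq1 -mulr_suml big_split /= sumr_const card_ord.
rewrite /hr1 mulr_sumr.
congr (_ = (_ + _) * _); apply: eq_bigr => i _.
by rewrite invfM mul1r mulrA.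
Qed.

Lemma hamling_eq2E (a b : R) : hamling_eq2 Rs v p z a b = hamling_red_eq2 N r2 v p z a b.
Proof.
rewrite /hamling_eq2 /hamling_red_eq2 -mulr_suml big_split /= sumr_const card_ord.
rewrite /hr2 mulr_sumr.
congr (_ = (_ + _) * _); apply: eq_bigr => i _.
by rewrite mulrAC.
Qed.

Lemma hc_quad_pos_root : hc Rs p z = quad_pos_root qa qb r1.
Proof.
have hDE : hD Rs p z = qb ^+ 2 + 4 * qa * r1.
  by rewrite /hD /hamling_qa /hamling_qb /=; ring.
by rewrite /hc /quad_pos_root /= hDE /hamling_qa /hamling_qb; congr (_ / _); ring.
Qed.

Lemma hamling_pos_solE (a b : R) : hamling_pos_sol Rs v p z a b ->
  [/\ hc Rs p z = a / b, b = hb0 Rs v p z & a = ha0 Rs v p z].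
Proof.
case=> a_gt0 b_gt0 d_neq0; rewrite hamling_eq1E hamling_eq2E => eq1 eq2.
have quad := hamling_quad_ratio p_gt0 z_gt0 a_gt0 b_gt0 eq1 eq2.
have hcE : hc Rs p z = a / b.
  by rewrite hc_quad_pos_root -(quad_pos_rootP _ qa_gt0 r1_gt0 (divr_gt0 a_gt0 b_gt0)).1.
have hbE : b = hb0 Rs v p z by rewrite /hb0 /= hcE; exact: hamling_bE.
by split=> //; rewrite /ha0 hcE -hbE divfK ?gt_eqF.
Qed.

Lemma hamling_pos_sol_ha0_hb0 : hamling_pos_sol Rs v p z (ha0 Rs v p z) (hb0 Rs v p z).
Proof.
have c_gt0 : 0 < hc Rs p z by rewrite hc_quad_pos_root quad_pos_root_gt0.
have quad : hamling_quad N r1 r2 p z (hc Rs p z) = 0.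
  by apply/(quad_pos_rootP _ qa_gt0 r1_gt0 c_gt0); rewrite hc_quad_pos_root.
have [b_gt0 d_neq0 eq1 eq2] :=
  hamling_red_sol N_ge0 r1_gt0 v_gt0 p_gt0 p_lt1 z_gt0 c_gt0 quad.
split; rewrite ?hamling_eq1E ?hamling_eq2E //.
exact: mulr_gt0.
Qed.

End HamlingSystem.

Theorem theorem3 (R : rcfType) (n : nat) (Rs : 'I_n -> R) (v p z : R) :
  (0 < n)%N -> 0 < v -> 0 < p -> p < 1 -> 0 < z -> (forall i, 0 < Rs i) ->
  (exists! ab : R * R, hamling_pos_sol Rs v p z ab.1 ab.2) /\
  (forall a0 b0 : R, hamling_pos_sol Rs v p z a0 b0 ->
     [/\ hc Rs p z = a0 / b0, b0 = hb0 Rs v p z & a0 = ha0 Rs v p z]).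
Proof.
move=> n_gt0 v_gt0 p_gt0 p_lt1 z_gt0 Rs_gt0.
have solE := hamling_pos_solE n_gt0 v_gt0 p_gt0 p_lt1 z_gt0 Rs_gt0.
split=> //; exists (ha0 Rs v p z, hb0 Rs v p z); split.
  exact: hamling_pos_sol_ha0_hb0.
by move=> [a b] /= /solE [_ -> ->].
Qed.
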